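(* The linear operator $\widetilde{\mathcal{V}}:\mathbb{R}^{p\times q}\to\mathbb{R}^{p\times q}$ defined by $$\widetilde{\mathcal{V}}:=\mathcal{I}+\sigma\mathcal{G}+\sigma\mathcal{A}^*_{\mathcal{J}_1}\mathcal{A}_{\mathcal{J}_1}-\sigma^2(\sigma|\mathcal{J}_1|+\rho)^{-1}\mathcal{A}^*_{\mathcal{J}_1}y_{\mathcal{J}_1}y^\top_{\mathcal{J}_1}\mathcal{A}_{\mathcal{J}_1}$$ (where the last two terms are absent if $\mathcal{J}_1=\emptyset$) is self-adjoint and positive definite.
   Context: Data: $X_1,\dots,X_n\in\mathbb{R}^{p\times q}$, $y=(y_1,\dots,y_n)^\top\in\{-1,+1\}^n$, $C>0$, $\tau>0$. $\mathcal{A}W=(\langle y_1X_1,W\rangle,\dots,\langle y_nX_n,W\rangle)^\top$ with $\langle X,Y\rangle=\operatorname{tr}(X^\top Y)$. For $\mathcal{I}'\subseteq\{1,\dots,n\}$, $\mathcal{A}_{\mathcal{I}'}W:=(\mathcal{A}W)_{\mathcal{I}'}$ (the subvector indexed by $\mathcal{I}'$) and $\mathcal{A}^*_{\mathcal{I}'}z:=\sum_{j\in\mathcal{I}'}z_jy_jX_j$; $y_{\mathcal{I}'}$ is the corresponding subvector of $y$. $S=[0,C]^n$, $\mathbb{B}_2^\tau=\{X:\|X\|_2\le\tau\}$ (spectral norm). Fix $\lambda^k\in\mathbb{R}^n$, $\Lambda^k\in\mathbb{R}^{p\times q}$, $\sigma>0$, $\rho\ge0$, and $(\widetilde{W},\widetilde{b})\in\mathbb{R}^{p\times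 q}\times\mathbb{R}$; let $\omega:=-\lambda^k-\sigma(\mathcal{A}\widetilde{W}+\widetilde{b}y-e_n)$ ($e_n$ the all-ones vector) and $\mathcal{J}_1:=\{j: 0<\omega_j<C\}$. $\mathcal{I}$ is the identity on $\mathbb{R}^{p\times q}$ and $\mathcal{G}$ is any element of the Clarke generalized Jacobian $\partial\Pi_{\mathbb{B}_2^\tau}(\Lambda^k+\sigma\widetilde{W})$ of the metric projection onto $\mathbb{B}_2^\tau$. Self-adjointness/positive definiteness are with respect to the trace inner product. *)

From mathcomp Require Import all_boot all_order all_algebra.
From mathcomp Require Import all_classical all_reals all_analysis.
Import numFieldNormedType.Exports.
Set Implicit Arguments. Unset Strict Implicit. Unset Printing Implicit Defensive.
Import Order.TTheory GRing.Theory Num.Theory.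
Local Open Scope ring_scope.
Local Open Scope classical_set_scope.

Section Defs.
Variables (R : realType) (p q n : nat).

Definition finner (X Y : 'M[R]_(p, q)) : R := \tr (X^T *m Y).

Definition vnorm2 (m : nat) (v : 'cV[R]_m) : R := Num.sqrt (\sum_i (v i 0) ^+ 2).

Definition specnorm (X : 'M[R]_(p, q)) : R :=
  sup [set vnorm2 (X *m v) | v in [set v : 'cV[R]_q | vnorm2 v = 1]].

Definition specball (tau : R) : set 'M[R]_(p, q) := [set X | specnorm X <= tau].

Definition is_metric_proj (K : set 'M[R]_(p, q)) (Pi : 'M[R]_(p, q) -> 'M[R]_(p, q)) :=
  forall Z, K (Pi Z) /\
    forall X, K X -> finner (Z - Pi Z) (Z - Pi Z) <= finner (Z - X) (Z - X).

Definition Bsubdiff (F : 'M[R]_(p, q) -> 'M[R]_(p, q)) (x : 'M[R]_(p, q))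
    (G : 'M[R]_(p, q) -> 'M[R]_(p, q)) : Prop :=
  exists u : nat -> 'M[R]_(p, q),
    u @ \oo --> x /\ (forall k, differentiable F (u k)) /\
    forall H, (fun k => 'd F (u k) H) @ \oo --> G H.

Definition clarke_jac (F : 'M[R]_(p, q) -> 'M[R]_(p, q)) (x : 'M[R]_(p, q))
    (G : 'M[R]_(p, q) -> 'M[R]_(p, q)) : Prop :=
  exists (m : nat) (lam : 'I_m -> R) (Gs : 'I_m -> 'M[R]_(p, q) -> 'M[R]_(p, q)),
    [/\ forall i, 0 <= lam i, \sum_i lam i = 1,
        forall i, Bsubdiff F x (Gs i) &
        forall H, G H = \sum_i lam i *: Gs i H].

Definition Aop (X : 'I_n -> 'M[R]_(p, q)) (y : 'I_n -> R) (W : 'M[R]_(p, q)) : 'I_n -> R :=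
  fun j => finner (y j *: X j) W.

Definition Aadj (J : {set 'I_n}) (X : 'I_n -> 'M[R]_(p, q)) (y : 'I_n -> R)
    (z : 'I_n -> R) : 'M[R]_(p, q) :=
  \sum_(j in J) (z j * y j) *: X j.

Definition omega (X : 'I_n -> 'M[R]_(p, q)) (y : 'I_n -> R) (lamk : 'I_n -> R)
    (sigma : R) (Wt : 'M[R]_(p, q)) (bt : R) : 'I_n -> R :=
  fun j => - lamk j - sigma * (Aop X y Wt j + bt * y j - 1).

Definition J1 (C : R) (om : 'I_n -> R) : {set 'I_n} :=
  [set j | (0 < om j) && (om j < C)].

Definition Vtilde (X : 'I_n -> 'M[R]_(p, q)) (y : 'I_n -> R) (J : {set 'I_n})
    (sigma rho : R) (G : 'M[R]_(p, q) -> 'M[R]_(p, q)) (W : 'M[R]_(p, q)) : 'M[R]_(p, q) :=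
  W + sigma *: G W +
  (if J == finset.set0 then 0 else
     sigma *: Aadj J X y (Aop X y W)
     - (sigma ^+ 2 / (sigma * #|J|%:R + rho)) *:
         Aadj J X y (fun j => y j * \sum_(i in J) y i * Aop X y W i)).

End Defs.

From mathcomp Require Import all_boot all_order all_algebra.
From mathcomp Require Import all_classical all_reals all_analysis.
From mathcomp Require Import ring lra.
Import numFieldNormedType.Exports.
Import Order.TTheory GRing.Theory Num.Theory.
Local Open Scope ring_scope.
Local Open Scope classical_set_scope.

(* The metric projection Pi onto any set K is a subgradient selection of the
   function psi z = <z, Pi z> - |Pi z|^2 / 2, a supremum of affine functions.
   Summing subgradient inequalities along the boundary of a small parallelogram
   at a point where Pi is differentiable, each edge cut into N pieces, bounds
   the antisymmetric part of the derivative by O(1/N); hence the derivative is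
   symmetric, and it is positive semidefinite.  Both properties pass to limits
   and to convex combinations, i.e. to every element G of the Clarke Jacobian.
   The remaining part of Vtilde is the identity plus the quadratic form
   sigma (|a|^2 - sigma (y_J . a)^2 / (sigma |J| + rho)) in a = A_J W, which is
   nonnegative by Cauchy-Schwarz since |y_J|^2 = |J|. *)

Section TraceInnerProduct.
Context {R : realType} {p q : nat}.
Local Notation E := 'M[R]_(p, q).

Lemma finnerE (X Y : E) : finner X Y = \sum_i \sum_j X j i * Y j i.
Proof.
by apply: eq_bigr => i _; rewrite !mxE; apply: eq_bigr => j _; rewrite mxE.
Qed.

Lemma finnerC (X Y : E) : finner X Y = finner Y X.
Proof. by rewrite /finner -mxtrace_tr trmx_mul trmxK. Qed.

Lemma finnerDr (X Y Z : E) : finner X (Y + Z) = finner X Y + finner X Z.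
Proof. by rewrite /finner mulmxDr mxtraceD. Qed.

Lemma finnerZr (X Y : E) a : finner X (a *: Y) = a * finner X Y.
Proof. by rewrite /finner -scalemxAr mxtraceZ. Qed.

Lemma finnerNr (X Y : E) : finner X (- Y) = - finner X Y.
Proof. by rewrite -scaleN1r finnerZr mulN1r. Qed.

Lemma finnerBr (X Y Z : E) : finner X (Y - Z) = finner X Y - finner X Z.
Proof. by rewrite finnerDr finnerNr. Qed.

Lemma finner0r (X : E) : finner X 0 = 0.
Proof. by rewrite -(subrr 0) finnerBr subrr. Qed.

Lemma finner_sumr (I : finType) (P : pred I) (X : E) (F : I -> E) :
  finner X (\sum_(i | P i) F i) = \sum_(i | P i) finner X (F i).
Proof. exact: (big_morph _ (finnerDr X) (finner0r X)). Qed.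

Lemma finnerDl (X Y Z : E) : finner (Y + Z) X = finner Y X + finner Z X.
Proof. by rewrite !(finnerC _ X) finnerDr. Qed.

Lemma finnerZl (X Y : E) a : finner (a *: Y) X = a * finner Y X.
Proof. by rewrite !(finnerC _ X) finnerZr. Qed.

Lemma finnerNl (X Y : E) : finner (- Y) X = - finner Y X.
Proof. by rewrite !(finnerC _ X) finnerNr. Qed.

Lemma finnerBl (X Y Z : E) : finner (Y - Z) X = finner Y X - finner Z X.
Proof. by rewrite !(finnerC _ X) finnerBr. Qed.

Lemma finner0l (X : E) : finner 0 X = 0.
Proof. by rewrite finnerC finner0r. Qed.

Lemma finner_ge0 (X : E) : 0 <= finner X X.
Proof. by rewrite finnerE; do 2!apply: sumr_ge0 => ? _; rewrite -expr2 sqr_ge0. Qed.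

Lemma finner_gt0 (X : E) : X != 0 -> 0 < finner X X.
Proof.
move=> X0; rewrite lt_def finner_ge0 andbT; apply: contra X0 => /eqP.
have sq_ge0 (a : R) : 0 <= a * a by rewrite -expr2 sqr_ge0.
rewrite finnerE => /psumr_eq0P X2_0; apply/eqP/matrixP => j i; rewrite mxE.
have /psumr_eq0P Xi2_0 := X2_0 (fun i _ => sumr_ge0 _ (fun j _ => sq_ge0 _)) i isT.
by apply/eqP; rewrite -[_ == 0]orbb -mulf_eq0 Xi2_0.
Qed.

Lemma cvg_finnerl {T : Type} {F : set_system T} {FF : Filter F} {f : T -> E} {L : E}
    (W : E) :
  f @ F --> L -> (fun t => finner (f t) W) @ F --> finner L W.
Proof.
move=> fL; under eq_cvg do rewrite finnerE; rewrite finnerE.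
apply: cvg_big => [|i _]; first exact: add_continuous.
apply: cvg_big => [|j _]; first exact: add_continuous.
exact: cvgM (cvg_comp _ _ fL (@coord_continuous R p q j i L)) (cvg_cst _).
Qed.

End TraceInnerProduct.

Lemma sumr_ord_nat2 (R : comNzRingType) n :
  2 * \sum_(i < n) (i%:R : R) = n%:R * (n%:R - 1).
Proof.
elim: n => [|n IH]; first by rewrite big_ord0 mulr0 mul0r.
by rewrite big_ord_recr /= mulrDr IH -addn1 natrD; ring.
Qed.

Section SubgradientSelection.
Context {R : realType} {p q : nat}.
Local Notation E := 'M[R]_(p, q).
Context {F : E -> E} {psi : E -> R}.
Hypothesis F_subgrad : forall w z : E, finner (F z) (w - z) <= psi w - psi z.

Lemma subgrad_chain (z : nat -> E) N :
  \sum_(i < N) finner (F (z i)) (z i.+1 - z i) <= psi (z N) - psi (z 0).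
Proof.
elim: N => [|N IH]; first by rewrite big_ord0 subrr.
by rewrite big_ord_recr /=; apply: le_trans (lerD IH (F_subgrad _ _)) _; lra.
Qed.

Section Subdivision.
Variables (x : E) (N : nat).
Hypothesis N_gt0 : (0 < N)%N.

Let N_neq0 : N%:R != 0 :> R.
Proof. by rewrite pnatr_eq0 -lt0n. Qed.

Definition edge_sum (u h : E) (s : R) : R :=
  \sum_(i < N)
    finner (s^-1 *: (F (s *: (u + (i%:R / N%:R) *: h) + x) - F x)) (N%:R^-1 *: h).

Lemma edge_sum_le u h s : s != 0 ->
  s ^+ 2 * edge_sum u h s
    <= psi (s *: (u + h) + x) - psi (s *: u + x) - s * finner (F x) h.
Proof.
move=> s_neq0; pose z i := s *: (u + (i%:R / N%:R) *: h) + x.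
have z_step i : z i.+1 - z i = (s / N%:R) *: h.
  by apply/matrixP => a b; rewrite !mxE -addn1 natrD; field.
have zN : z N = s *: (u + h) + x by rewrite /z divff // scale1r.
have z0 : z 0%N = s *: u + x by rewrite /z mul0r scale0r addr0.
have Fx_sum : s * finner (F x) h = \sum_(i < N) finner (F x) (z i.+1 - z i).
  under eq_bigr do rewrite z_step.
  by rewrite sumr_const card_ord finnerZr -mulr_natr; field.
have -> : s ^+ 2 * edge_sum u h s = \sum_(i < N) finner (F (z i)) (z i.+1 - z i)
    - \sum_(i < N) finner (F x) (z i.+1 - z i).
  rewrite /edge_sum mulr_sumr -sumrB; apply: eq_bigr => i _.
  rewrite z_step /z -finnerBl finnerZl !finnerZr.
  by field; rewrite N_neq0 s_neq0.
by rewrite -zN -z0 Fx_sum lerB ?subgrad_chain.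
Qed.

Lemma edge_sum_cvg u h : differentiable F x ->
  edge_sum u h s @[s --> 0^'] -->
    finner ('d F x u) h + (N%:R - 1) / (2 * N%:R) * finner ('d F x h) h.
Proof.
move=> dFx.
have -> : finner ('d F x u) h + (N%:R - 1) / (2 * N%:R) * finner ('d F x h) h =
    \sum_(i < N) finner ('d F x (u + (i%:R / N%:R) *: h)) (N%:R^-1 *: h).
  have sum_ord : \sum_(i < N) (i%:R : R) = N%:R * (N%:R - 1) / 2.
    by rewrite -sumr_ord_nat2; field.
  under eq_bigr do rewrite linearD linearZ /= finnerDl finnerZl !finnerZr.
  rewrite big_split /= sumr_const card_ord -mulr_suml -mulr_suml sum_ord -mulr_natr.
  by field.
apply: cvg_big => [|i _]; first exact: add_continuous.
apply: cvg_finnerl; have := @diff_derivable _ _ _ F x (u + (i%:R / N%:R) *: h) dFx.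
by rewrite /derivable -deriveE.
Qed.

Definition parallelogram_sum (a b : E) (s : R) : R :=
  edge_sum 0 a s + edge_sum a b s + edge_sum (a + b) (- a) s + edge_sum b (- b) s.

Lemma parallelogram_sum_le0 a b : \forall s \near 0^', parallelogram_sum a b s <= 0.
Proof.
near=> s; have s_neq0 : s != 0 by near: s; exact: nbhs_dnbhs_neq.
suff : s ^+ 2 * parallelogram_sum a b s <= 0.
  by rewrite pmulr_rle0 // exprn_even_gt0.
have := edge_sum_le 0 a s s_neq0; have := edge_sum_le a b s s_neq0.
have := edge_sum_le (a + b) (- a) s s_neq0; have := edge_sum_le b (- b) s s_neq0.
have -> : a + b + - a = b by rewrite addrC addKr.
rewrite add0r subrr !finnerNr /parallelogram_sum !mulrDr; lra.
Unshelve. all: by end_near.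
Qed.

Lemma parallelogram_sum_cvg a b : differentiable F x ->
  parallelogram_sum a b s @[s --> 0^'] -->
    finner ('d F x a) b - finner ('d F x b) a
      - (finner ('d F x a) a + finner ('d F x b) b) / N%:R.
Proof.
move=> dFx.
pose c := (N%:R - 1) / (2 * N%:R) : R.
have -> : finner ('d F x a) b - finner ('d F x b) a
      - (finner ('d F x a) a + finner ('d F x b) b) / N%:R =
    (finner ('d F x 0) a + c * finner ('d F x a) a)
    + (finner ('d F x a) b + c * finner ('d F x b) b)
    + (finner ('d F x (a + b)) (- a) + c * finner ('d F x (- a)) (- a))
    + (finner ('d F x b) (- b) + c * finner ('d F x (- b)) (- b)).
  rewrite !linearD !linearN linear0 /= !finnerDl !finnerNl !finnerNr !finner0l /c.
  move: (finner ('d F x a) a) (finner ('d F x b) b) => A B.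
  move: (finner ('d F x a) b) (finner ('d F x b) a) => Cab Cba.
  by field.
by apply: cvgD; [apply: cvgD; [apply: cvgD|]|]; exact: edge_sum_cvg.
Qed.

(* Cutting the edges is essential: the bound for N = 1 is also satisfied by the
   monotone, non-symmetric map a |-> a + K a with K a quarter-turn rotation. *)
Lemma differential_skew_le a b : differentiable F x ->
  finner ('d F x a) b - finner ('d F x b) a
    <= (finner ('d F x a) a + finner ('d F x b) b) / N%:R.
Proof.
move=> dFx; rewrite -subr_le0.
exact: cvgr_to_le (parallelogram_sum_cvg a b dFx) (parallelogram_sum_le0 a b).
Qed.

End Subdivision.

Lemma differential_sym {x} : differentiable F x ->
  forall a b, finner a ('d F x b) = finner ('d F x a) b.
Proof.
move=> dFx a b; rewrite finnerC.
suff skew_le0 u v : finner ('d F x u) v - finner ('d F x v) u <= 0.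
  by apply/eqP; rewrite eq_le; apply/andP; split; rewrite -subr_le0.
set Q := finner ('d F x u) u + finner ('d F x v) v.
have Q_harmonic : (Q * harmonic k) @[k --> \oo] --> 0.
  by rewrite -(mulr0 Q); apply: cvgM (cvg_cst _) cvg_harmonic.
apply: (cvgr_to_ge Q_harmonic); apply: nearW => k.
exact: differential_skew_le.
Qed.

Lemma differential_ge0 {x} : differentiable F x -> forall a, 0 <= finner ('d F x a) a.
Proof.
move=> dFx a; have := differential_skew_le x 1 isT a 0 dFx.
by rewrite linear0 finner0r !finner0l divr1 subr0 addr0.
Qed.

Lemma Bsubdiff_sym {x G} : Bsubdiff F x G -> forall U W, finner U (G W) = finner (G U) W.
Proof.
case=> u [_ [dFu dF_cvg]] U W.
have lim_UW : finner ('d F (u k) U) W @[k --> \oo] --> finner (G U) W.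
  exact: cvg_finnerl.
have lim_WU : finner ('d F (u k) U) W @[k --> \oo] --> finner (G W) U.
  under eq_cvg do rewrite -(differential_sym (dFu _)) finnerC.
  exact: cvg_finnerl.
rewrite finnerC -(cvg_lim (@norm_hausdorff _ R^o) lim_WU).
by rewrite -(cvg_lim (@norm_hausdorff _ R^o) lim_UW).
Qed.

Lemma Bsubdiff_ge0 {x G} : Bsubdiff F x G -> forall W, 0 <= finner W (G W).
Proof.
case=> u [_ [dFu dF_cvg]] W; rewrite finnerC.
apply: (cvgr_to_ge (cvg_finnerl W (dF_cvg W))); apply: nearW => k.
exact: differential_ge0.
Qed.

Lemma clarke_jac_sym {x G} : clarke_jac F x G ->
  forall U W, finner U (G W) = finner (G U) W.
Proof.
case=> m [lam [Gs [_ _ GsB GE]]] U W.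
rewrite !GE finner_sumr (finnerC _ W) finner_sumr; apply: eq_bigr => i _.
by rewrite !finnerZr (Bsubdiff_sym (GsB i)) finnerC.
Qed.

Lemma clarke_jac_ge0 {x G} : clarke_jac F x G -> forall W, 0 <= finner W (G W).
Proof.
case=> m [lam [Gs [lam_ge0 _ GsB GE]]] W.
rewrite GE finner_sumr; apply: sumr_ge0 => i _.
by rewrite finnerZr mulr_ge0 // (Bsubdiff_ge0 (GsB i)).
Qed.

End SubgradientSelection.

Section MetricProjection.
Context {R : realType} {p q : nat}.
Context {K : set 'M[R]_(p, q)} {Pi : 'M[R]_(p, q) -> 'M[R]_(p, q)}.
Hypothesis Pi_proj : is_metric_proj K Pi.

(* psi z = sup_(k in K) (<k, z> - |k|^2 / 2), the supremum being attained at
   k = Pi z; no convexity of K is needed. *)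
Definition proj_potential (z : 'M[R]_(p, q)) : R :=
  finner z (Pi z) - finner (Pi z) (Pi z) / 2.

Lemma metric_proj_subgrad w z :
  finner (Pi z) (w - z) <= proj_potential w - proj_potential z.
Proof.
have [_ Pi_min] := Pi_proj w; have [PizK _] := Pi_proj z; have := Pi_min _ PizK.
rewrite !finnerBl !finnerBr /proj_potential.
by rewrite (finnerC (Pi w) w) (finnerC (Pi z) w) (finnerC (Pi z) z); lra.
Qed.

End MetricProjection.

Lemma sum_sign_mul_sqr_le {R : realFieldType} {I : finType} (J : {set I})
    (y a : I -> R) :
  (forall j, y j ^+ 2 = 1) ->
  (\sum_(j in J) y j * a j) ^+ 2 <= #|J|%:R * \sum_(j in J) a j ^+ 2.
Proof.
move=> y2; have [/cards0_eq -> | J_gt0] := posnP #|J|.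
  by rewrite !big_set0 mulr0 expr2 mulr0.
set k : R := #|J|%:R; set S := \sum_(j in J) y j * a j.
have k_gt0 : 0 < k by rewrite ltr0n.
rewrite -subr_ge0 -(pmulr_rge0 _ k_gt0).
have -> : k * (k * \sum_(j in J) a j ^+ 2 - S ^+ 2)
    = \sum_(j in J) (k * a j - S * y j) ^+ 2.
  transitivity (\sum_(j in J) (k ^+ 2 * a j ^+ 2 - 2 * k * S * (y j * a j) + S ^+ 2)).
    by rewrite big_split /= sumrB -!mulr_sumr -/S sumr_const -[S *+ _]mulr_natr; ring.
  by apply: eq_bigr => j _; rewrite sqrrB !exprMn y2 mulr1; ring.
by apply: sumr_ge0 => j _; exact: sqr_ge0.
Qed.

Section Vtilde.
Context {R : realType} {p q n : nat}.
Variables (X : 'I_n -> 'M[R]_(p, q)) (y : 'I_n -> R) (J : {set 'I_n}) (sigma rho : R).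

Definition Jform (a b : 'I_n -> R) : R :=
  if J == finset.set0 then 0 else
  sigma * \sum_(j in J) a j * b j - sigma ^+ 2 / (sigma * #|J|%:R + rho)
    * ((\sum_(j in J) y j * a j) * (\sum_(j in J) y j * b j)).

Lemma finner_Aadj z U : finner U (Aadj J X y z) = \sum_(j in J) z j * Aop X y U j.
Proof.
rewrite /Aadj finner_sumr; apply: eq_bigr => j _.
by rewrite finnerZr /Aop finnerZl (finnerC U) mulrA.
Qed.

Lemma finner_Vtilde G U W :
  finner U (Vtilde X y J sigma rho G W)
    = finner U W + sigma * finner U (G W) + Jform (Aop X y U) (Aop X y W).
Proof.
rewrite /Vtilde /Jform !finnerDr finnerZr; case: ifP => _; first by rewrite finner0r.
rewrite finnerBr !finnerZr !finner_Aadj; congr (_ + (_ * _ - _ * _)).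
  by apply: eq_bigr => j _; rewrite mulrC.
by rewrite mulrC mulr_sumr; apply: eq_bigr => j _; rewrite mulrAC mulrC.
Qed.

Lemma JformC a b : Jform a b = Jform b a.
Proof.
rewrite /Jform [(\sum_(j in J) y j * a j) * _]mulrC.
by rewrite (eq_bigr (fun j => b j * a j)) // => j _; rewrite mulrC.
Qed.

Lemma Jform_ge0 a : (forall j, y j ^+ 2 = 1) -> 0 < sigma -> 0 <= rho -> 0 <= Jform a a.
Proof.
move=> y2 sigma_gt0 rho_ge0; rewrite /Jform; case: ifP => // /negbT.
rewrite -card_gt0 => J_gt0.
have CS := sum_sign_mul_sqr_le J y a y2.
have Q_ge0 : 0 <= \sum_(j in J) a j ^+ 2 by apply: sumr_ge0 => j _; exact: sqr_ge0.
have k_gt0 : 0 < #|J|%:R :> R by rewrite ltr0n.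
under eq_bigr do rewrite -expr2.
move: (\sum_(j in J) y j * a j) (\sum_(j in J) a j ^+ 2) (#|J|%:R : R) CS Q_ge0 k_gt0.
move=> S Q k CS Q_ge0 k_gt0.
have d_gt0 : 0 < sigma * k + rho by rewrite ltr_wpDr // mulr_gt0.
have -> : sigma * Q - sigma ^+ 2 / (sigma * k + rho) * (S * S)
    = sigma * (sigma * (k * Q - S ^+ 2) + rho * Q) / (sigma * k + rho).
  by field; rewrite gt_eqF.
rewrite divr_ge0 ?mulr_ge0 ?addr_ge0 ?mulr_ge0 ?subr_ge0 // ltW //.
Qed.

End Vtilde.

Theorem proposition3 (R : realType) (p q n : nat)
  (X : 'I_n -> 'M[R]_(p, q)) (y : 'I_n -> R) (C tau : R)
  (hy : forall i, y i = 1 \/ y i = -1) (hC : 0 < C) (htau : 0 < tau)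
  (lamk : 'I_n -> R) (Lamk : 'M[R]_(p, q)) (sigma rho : R)
  (hsigma : 0 < sigma) (hrho : 0 <= rho)
  (Wt : 'M[R]_(p, q)) (bt : R)
  (Pi : 'M[R]_(p, q) -> 'M[R]_(p, q))
  (hPi : is_metric_proj (specball tau) Pi)
  (G : 'M[R]_(p, q) -> 'M[R]_(p, q))
  (hG : clarke_jac Pi (Lamk + sigma *: Wt) G) :
  let V := Vtilde X y (J1 C (omega X y lamk sigma Wt bt)) sigma rho G in
  (forall U W, finner U (V W) = finner (V U) W) /\
  (forall W, W != 0 -> 0 < finner W (V W)).
Proof.
move=> V; have Pi_subgrad := metric_proj_subgrad hPi.
have y2 j : y j ^+ 2 = 1 by case: (hy j) => ->; rewrite ?sqrrN expr1n.
split => [U W | W W_neq0].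
  rewrite [RHS]finnerC !finner_Vtilde JformC (finnerC U W).
  by rewrite (clarke_jac_sym Pi_subgrad hG) (finnerC (G U)).
rewrite finner_Vtilde -addrA ltr_wpDr ?finner_gt0 // addr_ge0 ?Jform_ge0 //.
by rewrite mulr_ge0 ?(ltW hsigma) ?(clarke_jac_ge0 Pi_subgrad hG).
Qed.
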